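(* Let $a,c>0$ and $b,d<0$ be real numbers with $x_A=x_B$, and let $W_0(z)=1$, $W_1(z)=z$, $W_n(z)=(az+b)W_{n-1}(z)+(cz+d)W_{n-2}(z)$ for $n\ge2$. Then for every $n\ge0$ the function $U_n(z)=W_n(z)/A(z)^{\lfloor n/2\rfloor}$ is a polynomial (of degree $\lceil n/2\rceil$), all of whose zeros are real and lie in the open interval $(u,x_B)$. Moreover, this interval is sharp: both $u$ and $x_B$ are limits of zeros of the polynomials $U_n(z)$.
   Context: Notation: $A(z)=az+b$, $B(z)=cz+d$, $x_A=-b/a$, $x_B=-d/c$, $\Delta_\Delta=c^2-a^2B(x_A)$, $x_\Delta^\pm=x_A+\frac{-2c\pm2\sqrt{\Delta_\Delta}}{a^2}$, $g(z)=(1-a)z^2-(b+c)z-d$, $\Delta_g=(b+c)^2+4d(1-a)$, $F=\Delta_g-\Delta_\Delta=d(a-2)^2+bc(2-a)+b^2$. The zeros of $g$ are $x_g^\pm=\frac{b+c}{2(1-a)}\pm\frac{\sqrt{\Delta_g}}{2|1-a|}$ if $a\neq1$, and $x_g^\pm=-d/(b+c)$ if $a=1$ and $b+c\ne0$. Define $u=x_\Delta^-$ if $a<2$ and $F\le0$; $u=x_g^+$ if $a<1$ and $F>0$; $u=x_g^-$ otherwise. A number $z^*$ is a limit of zeros of $\{U_n\}$ if there exist zeros $z_n$ of $U_n$ with $z_n\to z^*$. *)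

From Stdlib Require Import Reals Lra List.
Import ListNotations.
Open Scope R_scope.

Record Cx := mkC { re : R; im : R }.
Definition C0 : Cx := mkC 0 0.
Definition Cadd (z w : Cx) : Cx := mkC (re z + re w) (im z + im w).
Definition Cmul (z w : Cx) : Cx :=
  mkC (re z * re w - im z * im w) (re z * im w + im z * re w).
Definition Cmod (z : Cx) : R := sqrt (re z ^ 2 + im z ^ 2).
Definition Cdist (z w : Cx) : R := Cmod (mkC (re z - re w) (im z - im w)).

(** * Polynomials with real coefficients as coefficient lists [p0; p1; ...] *)
Definition reval (p : list R) (x : R) : R :=
  fold_right (fun coef acc => coef + x * acc) 0 p.
Definition ceval (p : list R) (z : Cx) : Cx :=
  fold_right (fun coef acc => Cadd (mkC coef 0) (Cmul z acc)) C0 p.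
Definition has_degree (p : list R) (m : nat) : Prop :=
  length p = S m /\ nth m p 0 <> 0.

Definition Af (a b z : R) : R := a * z + b.
Definition Bf (c d z : R) : R := c * z + d.
Definition xA (a b : R) : R := - b / a.
Definition xB (c d : R) : R := - d / c.

Fixpoint W (a b c d : R) (n : nat) (z : R) : R :=
  match n with
  | O => 1
  | S O => z
  | S ((S m) as k) => Af a b z * W a b c d k z + Bf c d z * W a b c d m z
  end.

Definition U_poly (a b c d : R) (n : nat) (p : list R) : Prop :=
  forall z : R, Af a b z <> 0 ->
    W a b c d n z / (Af a b z) ^ (Nat.div2 n) = reval p z.

Definition zero_of_U (a b c d : R) (n : nat) (z : Cx) : Prop :=
  exists p, U_poly a b c d n p /\ ceval p z = C0.

Definition limit_of_zeros (a b c d : R) (zs : R) : Prop :=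
  exists (N : nat) (zn : nat -> Cx),
    (forall n, (N <= n)%nat -> zero_of_U a b c d n (zn n)) /\
    (forall eps, 0 < eps -> exists M : nat, forall n, (M <= n)%nat ->
        Cdist (zn n) (mkC zs 0) < eps).

Definition DeltaDelta (a b c d : R) : R := c ^ 2 - a ^ 2 * Bf c d (xA a b).
Definition xDelta_minus (a b c d : R) : R :=
  xA a b + (- 2 * c - 2 * sqrt (DeltaDelta a b c d)) / a ^ 2.
Definition Deltag (a b c d : R) : R := (b + c) ^ 2 + 4 * d * (1 - a).
Definition Ff (a b c d : R) : R := d * (a - 2) ^ 2 + b * c * (2 - a) + b ^ 2.
Definition xg_plus (a b c d : R) : R :=
  if Req_EM_T a 1 then - d / (b + c)
  else (b + c) / (2 * (1 - a)) + sqrt (Deltag a b c d) / (2 * Rabs (1 - a)).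
Definition xg_minus (a b c d : R) : R :=
  if Req_EM_T a 1 then - d / (b + c)
  else (b + c) / (2 * (1 - a)) - sqrt (Deltag a b c d) / (2 * Rabs (1 - a)).
Definition u (a b c d : R) : R :=
  if Rlt_dec a 2 then
    if Rle_dec (Ff a b c d) 0 then xDelta_minus a b c d
    else if Rlt_dec a 1 then xg_plus a b c d else xg_minus a b c d
  else xg_minus a b c d.

(* Since x_A = x_B = r, one has A(z) = a (z - r) and B(z) = c (z - r), so
   W_n = (z - r)^(n/2) V_n, where the polynomials V_n (= U_n up to the factor a^(n/2)) obey
   V_(n+2) = k_n V_(n+1) + c V_n with k_n alternating between a and a (z - r).  At a zero
   of V_(n+1) this gives V_(n+2) = c V_n, so, as long as V_n(r) > 0 and the sign of V_n(u)
   alternates with the degree, the zeros of consecutive V_n stay real, simple and interlaced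
   in (u, r).  The sign of V_n(u) is read off W_n(u): W_n(u) = u^n when g(u) = 0, and at the
   band edge u = x_Delta^- = r - 4 c / a^2 the characteristic roots of W coincide.
   Sharpness: every other V_n satisfies a Chebyshev recurrence, which fixes the sign of V_n
   at r + 2 c (cos (k PI / m) - 1) / a^2; k = 1 gives zeros near r and k = m - 1 zeros near
   the band edge.  When u is a root of g, just above u the characteristic roots of W are
   real and the dominant one forces a sign change. *)

From Stdlib Require Import Reals List Lra Lia ClassicalEpsilon.
Import ListNotations.
Open Scope R_scope.

(** * Polynomials as coefficient lists *)

Fixpoint padd (p q : list R) : list R :=
  match p, q with
  | [], _ => q
  | _, [] => p
  | x :: p', y :: q' => (x + y) :: padd p' q'
  end.

Definition pscal (k : R) (p : list R) : list R := map (Rmult k) p.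

Definition pmul_Xsub (r : R) (p : list R) : list R := padd (0 :: p) (pscal (- r) p).

Lemma reval_cons c p x : reval (c :: p) x = c + x * reval p x.
Proof. reflexivity. Qed.

Lemma reval_padd p q x : reval (padd p q) x = reval p x + reval q x.
Proof.
  revert q; induction p as [|c p IH]; intros [|e q]; simpl; try ring.
  rewrite IH; ring.
Qed.

Lemma reval_pscal k p x : reval (pscal k p) x = k * reval p x.
Proof. induction p as [|c p IH]; simpl; [ring|]. unfold pscal in *; simpl; rewrite IH; ring. Qed.

Lemma reval_pmul_Xsub r p x : reval (pmul_Xsub r p) x = (x - r) * reval p x.
Proof. unfold pmul_Xsub. rewrite reval_padd, reval_cons, reval_pscal. ring. Qed.

Lemma length_padd p q : length (padd p q) = Nat.max (length p) (length q).
Proof. revert q; induction p as [|c p IH]; intros [|e q]; simpl; auto. Qed.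

Lemma nth_padd p q i : nth i (padd p q) 0 = nth i p 0 + nth i q 0.
Proof.
  revert q i; induction p as [|c p IH]; intros [|e q] [|i]; simpl; try ring; auto.
Qed.

Lemma length_pscal k p : length (pscal k p) = length p.
Proof. apply length_map. Qed.

Lemma nth_pscal k p i : nth i (pscal k p) 0 = k * nth i p 0.
Proof. revert i; induction p as [|c p IH]; intros [|i]; simpl; try ring; auto. Qed.

Lemma reval_continuous p : continuity (reval p).
Proof.
  induction p as [|c p IH]; simpl.
  - apply continuity_const; intros x y; reflexivity.
  - apply (continuity_plus (fun _ => c) (fun x => x * reval p x)).
    + apply continuity_const; intros x y; reflexivity.
    + apply (continuity_mult id (reval p)); auto.
      apply derivable_continuous, derivable_id.
Qed.

Definition has_pos_degree (p : list R) (k : nat) : Prop := length p = S k /\ 0 < nth k p 0.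

Lemma has_degree_of_pos p k : has_pos_degree p k -> has_degree p k.
Proof. intros [Hl Hn]; split; [exact Hl | lra]. Qed.

Lemma has_pos_degree_pscal s p k : 0 < s -> has_pos_degree p k -> has_pos_degree (pscal s p) k.
Proof.
  intros Hs [Hl Hn]. hnf. rewrite length_pscal, nth_pscal. split; [exact Hl | nra].
Qed.

Lemma has_pos_degree_padd p q k :
  has_pos_degree p k -> (length q <= k)%nat -> has_pos_degree (padd p q) k.
Proof.
  intros [Hl Hn] Hq. hnf. rewrite length_padd, nth_padd, (nth_overflow q) by lia.
  split; [lia | lra].
Qed.

Lemma has_pos_degree_pmul_Xsub r p k : has_pos_degree p k -> has_pos_degree (pmul_Xsub r p) (S k).
Proof.
  intros [Hl Hn]. unfold pmul_Xsub. hnf.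
  rewrite length_padd, length_pscal, nth_padd, nth_pscal, (nth_overflow p (n := S k)) by lia.
  simpl. rewrite Hl. split; [f_equal; lia | lra].
Qed.

Lemma Cx_eq z w : re z = re w -> im z = im w -> z = w.
Proof. destruct z, w; simpl; intros; subst; reflexivity. Qed.

Lemma ceval_cons c p w : ceval (c :: p) w = Cadd (mkC c 0) (Cmul w (ceval p w)).
Proof. reflexivity. Qed.

Lemma ceval_real p x : ceval p (mkC x 0) = mkC (reval p x) 0.
Proof.
  induction p as [|c p IH]; [reflexivity|].
  rewrite ceval_cons, IH. apply Cx_eq; simpl; ring.
Qed.

Lemma Cmul_eq0 z w : Cmul z w = C0 -> z = C0 \/ w = C0.
Proof.
  destruct z as [x y], w as [v t]; unfold Cmul, C0; simpl; intros H.
  injection H as H1 H2.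
  assert (E : (x * x + y * y) * (v * v + t * t) = 0) by nra.
  apply Rmult_integral in E as [E|E]; [left|right];
    apply Cx_eq; simpl; nra.
Qed.

Lemma Cdist_real x y : Cdist (mkC x 0) (mkC y 0) = Rabs (x - y).
Proof.
  unfold Cdist, Cmod; cbn [re im].
  replace ((x - y) ^ 2 + (0 - 0) ^ 2) with (Rsqr (x - y)) by (unfold Rsqr; ring).
  apply sqrt_Rsqr_abs.
Qed.

Fixpoint synth_div (p : list R) (x : R) : list R :=
  match p with
  | [] => []
  | _ :: [] => []
  | _ :: p' => reval p' x :: synth_div p' x
  end.

Lemma synth_div_cons2 c0 c1 p x :
  synth_div (c0 :: c1 :: p) x = reval (c1 :: p) x :: synth_div (c1 :: p) x.
Proof. reflexivity. Qed.

Lemma reval_synth_div p x y : reval p y = (y - x) * reval (synth_div p x) y + reval p x.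
Proof.
  induction p as [|c0 [|c1 p] IH]; [simpl; ring | simpl; ring |].
  rewrite synth_div_cons2, !reval_cons. rewrite !reval_cons in IH. rewrite IH. ring.
Qed.

Lemma ceval_synth_div p x w :
  ceval p w = Cadd (Cmul (mkC (re w - x) (im w)) (ceval (synth_div p x) w)) (mkC (reval p x) 0).
Proof.
  induction p as [|c0 [|c1 p] IH]; try (apply Cx_eq; simpl; ring).
  rewrite ceval_cons, IH, synth_div_cons2, ceval_cons, (reval_cons c0).
  apply Cx_eq; simpl; ring.
Qed.

Lemma length_synth_div p x : length (synth_div p x) = pred (length p).
Proof.
  induction p as [|c0 [|c1 p] IH]; auto.
  rewrite synth_div_cons2; simpl in *; rewrite IH; reflexivity.
Qed.

Lemma nth_synth_div p x k : length p = S (S k) -> nth k (synth_div p x) 0 = nth (S k) p 0.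
Proof.
  revert k; induction p as [|c0 [|c1 p] IH]; intros k Hl; try discriminate.
  rewrite synth_div_cons2. destruct k as [|k].
  - destruct p; [simpl; ring | discriminate].
  - apply IH. simpl in *; lia.
Qed.

Lemma has_degree_synth_div p m x :
  has_degree p (S m) -> has_degree (synth_div p x) m /\ nth m (synth_div p x) 0 = nth (S m) p 0.
Proof.
  intros [Hl Hn]. unfold has_degree. rewrite !nth_synth_div by assumption.
  repeat split; auto. now rewrite length_synth_div, Hl.
Qed.

Fixpoint root_prod (z : nat -> R) (k : nat) (x : R) : R :=
  match k with O => 1 | S k' => root_prod z k' x * (x - z k') end.

Lemma root_prod_root z K i : (i < K)%nat -> root_prod z K (z i) = 0.
Proof.
  induction K as [|K IH]; intros Hi; [lia|]. simpl.
  destruct (Nat.eq_dec i K) as [->|Hne]; [ring|]. rewrite IH by lia; ring.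
Qed.

Lemma root_prod_sign K z x j : (j <= K)%nat ->
  (forall i, (i < j)%nat -> z i < x) -> (forall i, (j <= i < K)%nat -> x < z i) ->
  0 < (-1) ^ (K - j) * root_prod z K x.
Proof.
  revert j; induction K as [|K IH]; intros j Hj Hlo Hhi.
  - replace j with O by lia. simpl; lra.
  - simpl root_prod. destruct (Nat.eq_dec j (S K)) as [->|Hne].
    + rewrite Nat.sub_diag.
      specialize (IH K (le_n K) ltac:(intros; apply Hlo; lia) ltac:(intros; lia)).
      rewrite Nat.sub_diag in IH. assert (z K < x) by (apply Hlo; lia). simpl in *; nra.
    + specialize (IH j ltac:(lia) Hlo ltac:(intros; apply Hhi; lia)).
      replace (S K - j)%nat with (S (K - j)) by lia.
      assert (x < z K) by (apply Hhi; lia). simpl; nra.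
Qed.

Lemma root_prod_eq0 z K x : root_prod z K x = 0 -> exists i, (i < K)%nat /\ x = z i.
Proof.
  induction K as [|K IH]; simpl; intros H; [lra|].
  apply Rmult_integral in H as [H|H].
  - destruct (IH H) as [i [Hi ->]]. exists i; split; auto.
  - exists K; split; [lia | lra].
Qed.

Definition increasing_on (z : nat -> R) (K : nat) : Prop :=
  forall i j, (i < j < K)%nat -> z i < z j.

Lemma increasing_on_le z K i j : increasing_on z K -> (i <= j < K)%nat -> z i <= z j.
Proof.
  intros Hz Hij. destruct (Nat.eq_dec i j) as [->|]; [lra|]. left; apply Hz; lia.
Qed.

Lemma synth_div_roots p z m :
  increasing_on z (S m) -> (forall i, (i < S m)%nat -> reval p (z i) = 0) ->
  forall i, (i < m)%nat -> reval (synth_div p (z m)) (z i) = 0.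
Proof.
  intros Hz Hr i Hi.
  pose proof (reval_synth_div p (z m) (z i)) as E.
  rewrite (Hr i), (Hr m) in E by lia.
  assert (Hlt : z i < z m) by (apply Hz; lia).
  destruct (Rmult_integral (z i - z m) (reval (synth_div p (z m)) (z i))) as [E'|E']; lra.
Qed.

Lemma factor_real m p z :
  has_degree p m -> increasing_on z m -> (forall i, (i < m)%nat -> reval p (z i) = 0) ->
  forall x, reval p x = nth m p 0 * root_prod z m x.
Proof.
  revert p; induction m as [|m IH]; intros p Hd Hz Hr x.
  - destruct Hd as [Hl _]. destruct p as [|c0 [|]]; try discriminate. simpl; ring.
  - destruct (has_degree_synth_div p m (z m) Hd) as [Hq Hqn].
    rewrite (reval_synth_div p (z m) x), (Hr m), IH, Hqn by
      (auto using synth_div_roots; intros i j Hij; apply Hz; lia).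
    simpl; ring.
Qed.

Lemma factor_complex m p z :
  has_degree p m -> increasing_on z m -> (forall i, (i < m)%nat -> reval p (z i) = 0) ->
  forall w, ceval p w = C0 -> exists i, (i < m)%nat /\ w = mkC (z i) 0.
Proof.
  revert p; induction m as [|m IH]; intros p Hd Hz Hr w Hw.
  - destruct Hd as [Hl Hn]. destruct p as [|c0 [|]]; try discriminate.
    injection Hw as H1 H2. simpl in Hn. lra.
  - destruct (has_degree_synth_div p m (z m) Hd) as [Hq _].
    rewrite (ceval_synth_div p (z m) w), (Hr m) in Hw by lia.
    assert (Hm : Cmul (mkC (re w - z m) (im w)) (ceval (synth_div p (z m)) w) = C0).
    { destruct (Cmul _ _); injection Hw as H1 H2; apply Cx_eq; simpl; lra. }
    apply Cmul_eq0 in Hm as [Hm|Hm].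
    + exists m; split; [lia|]. injection Hm as H1 H2. apply Cx_eq; simpl; lra.
    + assert (Hz' : increasing_on z m) by (intros i j Hij; apply Hz; lia).
      destruct (IH (synth_div p (z m)) Hq Hz' (synth_div_roots p z m Hz Hr) w Hm) as [i [Hi ->]].
      exists i; split; auto.
Qed.

(** * Polynomials with simple real zeros in an interval *)

Definition splits_in (lo hi : R) (p : list R) (K : nat) (z : nat -> R) : Prop :=
  increasing_on z K /\ (forall i, (i < K)%nat -> lo < z i < hi) /\
  (forall x, reval p x = nth K p 0 * root_prod z K x).

Lemma splits_in_root lo hi p K z i : splits_in lo hi p K z -> (i < K)%nat -> reval p (z i) = 0.
Proof. intros [_ [_ H]] Hi. rewrite H, root_prod_root by auto. ring. Qed.

Lemma splits_in_real_root lo hi p K z x :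
  splits_in lo hi p K z -> nth K p 0 <> 0 -> reval p x = 0 -> exists i, (i < K)%nat /\ x = z i.
Proof.
  intros [_ [_ H]] Hn Hx. rewrite H in Hx.
  apply Rmult_integral in Hx as [Hx|Hx]; [contradiction | now apply root_prod_eq0].
Qed.

Lemma splits_in_complex_root lo hi p K z w :
  splits_in lo hi p K z -> has_degree p K -> ceval p w = C0 -> im w = 0 /\ lo < re w < hi.
Proof.
  intros Hs Hd Hw.
  destruct (factor_complex K p z Hd (proj1 Hs) (fun i => splits_in_root lo hi p K z i Hs) w Hw)
    as [i [Hi ->]].
  split; [reflexivity | apply Hs, Hi].
Qed.

Lemma splits_in_pscal lo hi k p K z : splits_in lo hi p K z -> splits_in lo hi (pscal k p) K z.
Proof.
  intros [H1 [H2 H3]]. split; [|split]; auto.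
  intros x. rewrite reval_pscal, nth_pscal, H3. ring.
Qed.

Lemma splits_in_weaken lo hi lo' hi' p K z :
  lo <= lo' -> hi' <= hi -> splits_in lo' hi' p K z -> splits_in lo hi p K z.
Proof.
  intros Hlo Hhi [H1 [H2 H3]]. split; [|split]; auto.
  intros i Hi. specialize (H2 i Hi). lra.
Qed.

Lemma IVT_strict (f : R -> R) x y :
  continuity f -> x < y -> f x * f y < 0 -> exists w, x < w < y /\ f w = 0.
Proof.
  intros Hc Hxy Hs.
  destruct (IVT_cor f x y Hc) as [w [[H1 H2] H3]]; [lra|lra|].
  exists w; split; auto.
  split; [destruct H1 as [H1|H1] | destruct H2 as [H2|H2]]; auto;
    subst; rewrite H3 in Hs; lra.
Qed.

Lemma pow_m1_sqr n : (-1) ^ n * (-1) ^ n = 1.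
Proof. rewrite <- Rpow_mult_distr. replace (-1 * -1) with 1 by ring. apply pow1. Qed.

Lemma opposite_signs_product k A B : 0 < (-1) ^ k * A -> (-1) ^ k * B < 0 -> A * B < 0.
Proof.
  intros H1 H2. pose proof (pow_m1_sqr k) as Hs.
  assert (((-1) ^ k * A) * ((-1) ^ k * B) < 0) by nra.
  nra.
Qed.

Lemma splits_of_alternation p K t :
  has_degree p K -> (forall j, (j < K)%nat -> t j < t (S j)) ->
  (forall j, (j <= K)%nat -> 0 < (-1) ^ (K - j) * reval p (t j)) ->
  exists z, splits_in (t O) (t K) p K z /\ forall j, (j < K)%nat -> t j < z j < t (S j).
Proof.
  intros Hd Ht Halt.
  assert (Hmono : forall i j, (i <= j <= K)%nat -> t i <= t j).
  { intros i j [Hij HjK]. induction Hij as [|j Hij IH]; [lra|].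
    specialize (IH ltac:(lia)). specialize (Ht j ltac:(lia)). lra. }
  assert (Hex : forall j, exists w, (j < K)%nat -> t j < w < t (S j) /\ reval p w = 0).
  { intros j. destruct (Nat.lt_ge_cases j K) as [Hj|Hj]; [|exists 0; lia].
    destruct (IVT_strict (reval p) (t j) (t (S j)) (reval_continuous p) (Ht j Hj))
      as [w Hw]; [|exists w; auto].
    rewrite Rmult_comm. apply (opposite_signs_product (K - S j)); [apply Halt; lia|].
    specialize (Halt j ltac:(lia)). replace (K - j)%nat with (S (K - S j)) in Halt by lia.
    simpl in Halt. lra. }
  destruct (choice _ Hex) as [z Hz].
  assert (Hinc : increasing_on z K).
  { intros i j Hij. destruct (Hz i ltac:(lia)) as [[_ Hi] _].
    destruct (Hz j ltac:(lia)) as [[Hj _] _]. pose proof (Hmono (S i) j ltac:(lia)). lra. }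
  exists z; split; [split; [|split]|].
  - exact Hinc.
  - intros i Hi. destruct (Hz i Hi) as [[H1 H2] _].
    pose proof (Hmono O i ltac:(lia)). pose proof (Hmono (S i) K ltac:(lia)). lra.
  - apply factor_real; auto. intros i Hi; apply Hz, Hi.
  - intros j Hj; apply Hz, Hj.
Qed.

Definition interlace (w z : nat -> R) (K L : nat) : Prop :=
  forall i, (i < K)%nat -> w i < z i /\ ((S i < L)%nat -> z i < w (S i)).

Lemma sign_at_interlacing_points lo hi p K L z w i :
  splits_in lo hi p K z -> 0 < nth K p 0 -> increasing_on w L -> interlace w z K L ->
  (K <= L <= S K)%nat -> (i < L)%nat -> 0 < (-1) ^ (K - i) * reval p (w i).
Proof.
  intros [_ [_ Hp]] Hlc Hw Hint HL Hi. rewrite Hp.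
  assert (Hs : 0 < (-1) ^ (K - i) * root_prod z K (w i)).
  { apply root_prod_sign; [lia | |].
    - intros j Hj. destruct (Hint j ltac:(lia)) as [_ H].
      pose proof (increasing_on_le w L (S j) i Hw ltac:(lia)). specialize (H ltac:(lia)). lra.
    - intros j Hj. destruct (Hint j ltac:(lia)) as [H _].
      pose proof (increasing_on_le w L i j Hw ltac:(lia)). lra. }
  nra.
Qed.

(* The nodes are [lo, w 0, ..., w (L-1)], followed by [hi] only when [L = K]. *)
Lemma splits_of_interlacing_signs lo hi p K L w :
  has_degree p (S K) -> (L = S K \/ L = K) -> (1 <= L)%nat ->
  increasing_on w L -> (forall i, (i < L)%nat -> lo < w i < hi) ->
  0 < (-1) ^ S K * reval p lo -> 0 < reval p hi ->
  (forall i, (i < L)%nat -> 0 < (-1) ^ (K - i) * reval p (w i)) ->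
  exists z, splits_in lo hi p (S K) z /\ interlace z w L (S K).
Proof.
  intros Hd HL HL1 Hinc Hb Hlo Hhi Hw.
  set (t := fun j => match j with O => lo | S i => if Nat.ltb i L then w i else hi end).
  assert (Ht_in : forall i, (i < L)%nat -> t (S i) = w i)
    by (intros i Hi; simpl; now rewrite (proj2 (Nat.ltb_lt i L) Hi)).
  assert (Ht_out : forall i, (L <= i)%nat -> t (S i) = hi)
    by (intros i Hi; simpl; now rewrite (proj2 (Nat.ltb_ge i L) Hi)).
  destruct (splits_of_alternation p (S K) t Hd) as [z [Hs Hz]].
  - intros [|i] Hi; [rewrite Ht_in by lia; apply Hb; lia|].
    destruct (Nat.lt_ge_cases (S i) L).
    + rewrite !Ht_in by lia. apply Hinc; lia.
    + rewrite Ht_in, Ht_out by lia. apply Hb; lia.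
  - intros [|i] Hi; [exact Hlo|].
    destruct (Nat.lt_ge_cases i L).
    + rewrite Ht_in by lia. replace (S K - S i)%nat with (K - i)%nat by lia. auto.
    + rewrite Ht_out by lia. replace (S K - S i)%nat with O by lia. simpl; lra.
  - exists z. split.
    + apply (splits_in_weaken lo hi (t O) (t (S K))); [simpl; lra | | exact Hs].
      destruct (Nat.lt_ge_cases K L) as [HK|HK].
      * rewrite Ht_in by lia. pose proof (Hb K HK). lra.
      * rewrite Ht_out by lia. lra.
    + intros i Hi. split.
      * rewrite <- Ht_in by lia. apply Hz; lia.
      * intros Hi'. rewrite <- Ht_in by lia. apply Hz; lia.
Qed.

(** * Second-order linear recurrences *)

Lemma nat_ind2 (P : nat -> Prop) :
  P O -> P 1%nat -> (forall n, P n -> P (S n) -> P (S (S n))) -> forall n, P n.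
Proof.
  intros H0 H1 HS n. enough (P n /\ P (S n)) by tauto.
  induction n as [|n [IH1 IH2]]; auto.
Qed.

Lemma eventually_neg_of_dominant al be q : be < 0 -> 0 < q < 1 ->
  exists N, forall n, (N <= n)%nat -> al * q ^ n + be < 0.
Proof.
  intros Hb Hq. pose proof (Rabs_pos al) as Ha.
  destruct (pow_lt_1_zero q ltac:(rewrite Rabs_right; lra) (- be / (Rabs al + 1)))
    as [N HN]; [apply Rdiv_lt_0_compat; lra|].
  exists N; intros n Hn. specialize (HN n Hn).
  assert (Hqn : 0 < q ^ n) by (apply pow_lt; lra).
  rewrite Rabs_right in HN by lra.
  assert (al * q ^ n <= Rabs al * q ^ n) by (apply Rmult_le_compat_r; [lra | apply Rle_abs]).
  assert (Rabs al * q ^ n * (Rabs al + 1) <= q ^ n * (Rabs al + 1) * (Rabs al + 1)) by nra.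
  assert (q ^ n * (Rabs al + 1) < - be) by
    (apply (Rmult_lt_reg_r (/ (Rabs al + 1))); [apply Rinv_0_lt_compat; lra|];
     replace (q ^ n * (Rabs al + 1) * / (Rabs al + 1)) with (q ^ n) by (field; lra); exact HN).
  nra.
Qed.

Section SecondOrderRecurrence.
Variables (A B : R) (s : nat -> R).
Hypothesis s_rec : forall n, s (S (S n)) = A * s (S n) + B * s n.

Lemma second_order_geometric : s O = 1 -> s 1%nat ^ 2 = A * s 1%nat + B ->
  forall n, s n = s 1%nat ^ n.
Proof.
  intros H0 Hq. apply nat_ind2; [simpl; lra | simpl; ring |].
  intros n IH1 IH2. rewrite s_rec, IH1, IH2. simpl. simpl in Hq. nra.
Qed.

Lemma second_order_double_root l : A = 2 * l -> B = - l ^ 2 ->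
  forall n, s n * l = l ^ n * (l * s O + INR n * (s 1%nat - l * s O)).
Proof.
  intros HA HB. apply nat_ind2; [simpl; ring | simpl; ring |].
  intros n IH1 IH2. rewrite s_rec, HA, HB, !S_INR.
  replace ((2 * l * s (S n) + - l ^ 2 * s n) * l) with
    (2 * l * (s (S n) * l) - l ^ 2 * (s n * l)) by ring.
  rewrite IH1, IH2, S_INR. simpl; ring.
Qed.

(* Both characteristic roots are negative; [s] starts above the smaller-modulus root
   [lp], so the dominant root [lm] enters with a negative coefficient. *)
Lemma second_order_eventually_alternating : A < 0 -> B < 0 -> 0 < A ^ 2 + 4 * B ->
  s O = 1 -> sqrt (A ^ 2 + 4 * B) < 2 * s 1%nat - A ->
  exists N, forall n, (N <= n)%nat -> (-1) ^ n * s n < 0.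
Proof.
  intros HA HB HD H0 Hs1. set (sq := sqrt (A ^ 2 + 4 * B)) in *.
  assert (Hsq : sq * sq = A ^ 2 + 4 * B) by (apply sqrt_sqrt; lra).
  assert (Hsq0 : 0 < sq) by (apply sqrt_lt_R0; lra).
  set (lp := (A + sq) / 2). set (lm := (A - sq) / 2).
  assert (Hlp : lp ^ 2 = A * lp + B) by (unfold lp; nra).
  assert (Hlm : lm ^ 2 = A * lm + B) by (unfold lm; nra).
  set (al := (s 1%nat - lm) / sq). set (be := (lp - s 1%nat) / sq).
  assert (Hbe : be < 0) by (unfold be, lp; apply Rdiv_neg_pos; lra).
  assert (Hbinet : forall n, s n = al * lp ^ n + be * lm ^ n).
  { apply nat_ind2.
    - rewrite H0. unfold al, be, lp, lm. simpl. field. lra.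
    - unfold al, be, lp, lm. simpl. field. lra.
    - intros n IH1 IH2. rewrite s_rec, IH1, IH2.
      replace (al * lp ^ S (S n) + be * lm ^ S (S n)) with
        (al * (lp ^ 2 * lp ^ n) + be * (lm ^ 2 * lm ^ n)) by (simpl; ring).
      rewrite Hlp, Hlm. simpl; ring. }
  assert (Hlp0 : lp < 0).
  { assert (sq < - A) by (assert (sq * sq < A * A) by nra; nra). unfold lp; lra. }
  assert (Hq : 0 < lp / lm < 1).
  { assert (lm < lp) by (unfold lm, lp; lra). assert (lm < 0) by lra.
    split; [apply Rdiv_neg_neg; lra|].
    apply (Rmult_lt_reg_r (- lm)); [lra|].
    replace (lp / lm * - lm) with (- lp) by (field; lra). lra. }
  destruct (eventually_neg_of_dominant al be (lp / lm) Hbe Hq) as [N HN].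
  exists N; intros n Hn.
  assert (Hlm0 : 0 < (- lm) ^ n) by (apply pow_lt; unfold lm; lra).
  replace ((-1) ^ n * s n) with ((- lm) ^ n * (al * (lp / lm) ^ n + be)).
  - specialize (HN n Hn). nra.
  - assert (Hlm1 : lm <> 0) by (unfold lm; lra).
    assert (E1 : (- lm) ^ n = (-1) ^ n * lm ^ n) by (rewrite <- Rpow_mult_distr; f_equal; ring).
    assert (E2 : (lp / lm) ^ n * lm ^ n = lp ^ n) by
      (rewrite <- Rpow_mult_distr; f_equal; field; exact Hlm1).
    rewrite Hbinet, E1, <- E2. ring.
Qed.

End SecondOrderRecurrence.

Lemma chebyshev_sin (s : nat -> R) t :
  (forall j, s (S (S j)) = 2 * cos t * s (S j) - s j) ->
  forall j, s j * sin t = s 1%nat * sin (INR j * t) - s O * sin (INR j * t - t).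
Proof.
  intros Hs. apply nat_ind2.
  - simpl. replace (0 * t - t) with (- t) by ring. rewrite Rmult_0_l, sin_0, sin_neg. ring.
  - simpl. replace (1 * t - t) with 0 by ring. rewrite Rmult_1_l, sin_0. ring.
  - intros j IH1 IH2.
    assert (Hrec : forall y, sin (y + t) = 2 * cos t * sin y - sin (y - t))
      by (intros y; rewrite sin_plus, sin_minus; ring).
    rewrite Hs, !S_INR.
    replace ((2 * cos t * s (S j) - s j) * sin t) with
      (2 * cos t * (s (S j) * sin t) - s j * sin t) by ring.
    rewrite IH1, IH2, S_INR.
    replace ((INR j + 1 + 1) * t) with ((INR j + 1) * t + t) by ring.
    replace ((INR j + 1) * t + t - t) with ((INR j + 1) * t) by ring.
    replace ((INR j + 1) * t - t) with (INR j * t) by ring.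
    rewrite Hrec. replace ((INR j + 1) * t - t) with (INR j * t) by ring.
    replace ((INR j + 1) * t) with (INR j * t + t) by ring.
    rewrite Hrec. ring.
Qed.

Lemma sin_cos_INR_PI k : sin (INR k * PI) = 0 /\ cos (INR k * PI) = (-1) ^ k.
Proof.
  induction k as [|k [H1 H2]].
  - simpl. rewrite Rmult_0_l, sin_0, cos_0. split; ring.
  - rewrite S_INR, Rmult_plus_distr_r, Rmult_1_l, sin_plus, cos_plus, H1, H2, sin_PI, cos_PI.
    simpl; split; ring.
Qed.

Lemma chebyshev_at_root (s : nat -> R) m k : (1 <= k < m)%nat ->
  (forall j, s (S (S j)) = 2 * cos (INR k * PI / INR m) * s (S j) - s j) ->
  s m = (-1) ^ k * s O.
Proof.
  intros Hk Hs. set (t := INR k * PI / INR m) in *.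
  assert (Hm : 0 < INR m) by (apply lt_0_INR; lia).
  assert (Hkm : INR k < INR m) by (apply lt_INR; lia).
  assert (Hk0 : 0 < INR k) by (apply lt_0_INR; lia).
  pose proof PI_RGT_0.
  assert (Ht : 0 < t < PI).
  { unfold t; split; [apply Rdiv_lt_0_compat; nra|].
    apply (Rmult_lt_reg_r (INR m)); auto.
    replace (INR k * PI / INR m * INR m) with (INR k * PI) by (field; lra). nra. }
  assert (Hsin : 0 < sin t) by (apply sin_gt_0; lra).
  pose proof (chebyshev_sin s t Hs m) as E.
  replace (INR m * t) with (INR k * PI) in E by (unfold t; field; lra).
  destruct (sin_cos_INR_PI k) as [S1 C1].
  rewrite sin_minus, S1, C1 in E.
  apply (Rmult_eq_reg_r (sin t)); [rewrite E; ring | lra].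
Qed.

Lemma cos_PI_div_lt_1 m : (1 <= m)%nat -> cos (PI / INR m) < 1.
Proof.
  intros Hm. pose proof PI_RGT_0. assert (H1 : 1 <= INR m) by (apply (le_INR 1); lia).
  assert (Ht : 0 < PI / INR m <= PI).
  { split; [apply Rdiv_lt_0_compat; lra|].
    apply (Rmult_le_reg_r (INR m)); [lra|].
    replace (PI / INR m * INR m) with PI by (field; lra). nra. }
  rewrite <- cos_0. apply cos_decreasing_1; lra.
Qed.

Lemma cos_PI_div_tends_to_1 eps : 0 < eps ->
  exists M, forall m, (M <= m)%nat -> 1 - cos (PI / INR m) < eps.
Proof.
  intros Heps.
  destruct (continuity_cos 0 eps Heps) as [del [Hdel Hcont]].
  destruct (archimed_cor1 (del / PI)) as [M [HM HM0]];
    [apply Rdiv_lt_0_compat; [lra | apply PI_RGT_0]|].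
  exists M; intros m Hm.
  assert (HM1 : 0 < INR M) by (apply lt_0_INR; lia).
  assert (HMm : INR M <= INR m) by (apply le_INR; lia).
  pose proof PI_RGT_0.
  assert (Ht : 0 < PI / INR m < del).
  { split; [apply Rdiv_lt_0_compat; lra|].
    apply (Rmult_lt_reg_r (/ PI)); [apply Rinv_0_lt_compat; lra|].
    replace (PI / INR m * / PI) with (/ INR m) by (field; lra).
    apply Rle_lt_trans with (/ INR M); [apply Rinv_le_contravar; lra | exact HM]. }
  specialize (Hcont (PI / INR m)). simpl in Hcont. unfold R_dist in Hcont.
  rewrite cos_0, Rminus_0_r, Rabs_right in Hcont by lra.
  assert (Hc : Rabs (cos (PI / INR m) - 1) < eps)
    by (apply Hcont; split; [split; [exact I | lra] | lra]).
  apply Rabs_def2 in Hc. lra.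
Qed.

Lemma div2_S_parity n : Nat.div2 (S n) = if Nat.even n then Nat.div2 n else S (Nat.div2 n).
Proof.
  revert n. apply nat_ind2; auto.
  intros n IH _.
  change (S (Nat.div2 (S n)) = if Nat.even n then S (Nat.div2 n) else S (S (Nat.div2 n))).
  rewrite IH. now destruct (Nat.even n).
Qed.

Lemma div2_add_div2_S n : (Nat.div2 n + Nat.div2 (S n))%nat = n.
Proof.
  revert n. apply nat_ind2; auto.
  intros n IH _. change (S (Nat.div2 n + S (Nat.div2 (S n))) = S (S n)). lia.
Qed.

Lemma parity_decomp n : exists p m, (p = 0 \/ p = 1)%nat /\ n = (p + 2 * m)%nat.
Proof.
  destruct (Nat.Even_or_Odd n) as [[m ->]|[m ->]]; [exists O | exists 1%nat]; exists m; split; lia.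
Qed.

(** * The reduced polynomials *)

Section Reduced.
Variables a c r : R.
Hypotheses (ha : 0 < a) (hc : 0 < c) (hr : 0 < r).

Definition Vcoef (n : nat) (x : R) : R := if Nat.even n then a else a * (x - r).

Fixpoint Vl (n : nat) : list R :=
  match n with
  | O => [1]
  | S O => [0; 1]
  | S ((S m) as k) =>
      padd (pscal a (if Nat.even m then Vl k else pmul_Xsub r (Vl k))) (pscal c (Vl m))
  end.

Definition V (n : nat) (x : R) : R := reval (Vl n) x.

Lemma V_0 x : V O x = 1.
Proof. unfold V; simpl; ring. Qed.

Lemma V_1 x : V 1%nat x = x.
Proof. unfold V; simpl; ring. Qed.

Lemma V_SS n x : V (S (S n)) x = Vcoef n x * V (S n) x + c * V n x.
Proof.
  unfold V, Vcoef. change (Vl (S (S n))) with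
    (padd (pscal a (if Nat.even n then Vl (S n) else pmul_Xsub r (Vl (S n)))) (pscal c (Vl n))).
  rewrite reval_padd, !reval_pscal. destruct (Nat.even n); rewrite ?reval_pmul_Xsub; ring.
Qed.

Lemma Vcoef_mul n x : Vcoef n x * Vcoef (S n) x = a ^ 2 * (x - r).
Proof.
  unfold Vcoef. rewrite Nat.even_succ, <- Nat.negb_even. destruct (Nat.even n); simpl; ring.
Qed.

Lemma V_SSSS n x :
  V (S (S (S (S n)))) x = (a ^ 2 * (x - r) + 2 * c) * V (S (S n)) x - c ^ 2 * V n x.
Proof.
  rewrite (V_SS (S (S n))), (V_SS (S n)).
  replace (Vcoef (S (S n)) x) with (Vcoef n x) by reflexivity.
  assert (E : Vcoef n x * V (S n) x = V (S (S n)) x - c * V n x) by (rewrite V_SS; ring).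
  replace (Vcoef n x * (Vcoef (S n) x * V (S (S n)) x + c * V (S n) x) + c * V (S (S n)) x)
    with ((Vcoef n x * Vcoef (S n) x) * V (S (S n)) x + c * (Vcoef n x * V (S n) x)
          + c * V (S (S n)) x) by ring.
  rewrite Vcoef_mul, E. ring.
Qed.

Lemma Vl_degree n : has_pos_degree (Vl n) (Nat.div2 (S n)).
Proof.
  revert n. apply nat_ind2.
  - split; simpl; [reflexivity | lra].
  - split; simpl; [reflexivity | lra].
  - intros n IH1 IH2.
    change (Vl (S (S n))) with
      (padd (pscal a (if Nat.even n then Vl (S n) else pmul_Xsub r (Vl (S n)))) (pscal c (Vl n))).
    change (Nat.div2 (S (S (S n)))) with (S (Nat.div2 (S n))).
    apply has_pos_degree_padd; [| rewrite length_pscal, (proj1 IH1); lia].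
    apply has_pos_degree_pscal; [exact ha|].
    change (Nat.div2 (S (S n))) with (S (Nat.div2 n)) in IH2.
    rewrite div2_S_parity. destruct (Nat.even n); [|apply has_pos_degree_pmul_Xsub]; exact IH2.
Qed.

Lemma V_at_r n : 0 < V n r.
Proof.
  revert n. apply nat_ind2; [rewrite V_0; lra | rewrite V_1; lra |].
  intros n IH1 IH2. rewrite V_SS. unfold Vcoef.
  destruct (Nat.even n); [nra|]. replace (r - r) with 0 by ring. nra.
Qed.

Lemma W_reduced_rec n z :
  W a (- (a * r)) c (- (c * r)) (S (S n)) z =
  a * (z - r) * W a (- (a * r)) c (- (c * r)) (S n) z
  + c * (z - r) * W a (- (a * r)) c (- (c * r)) n z.
Proof.
  change (W a (- (a * r)) c (- (c * r)) (S (S n)) z) with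
    (Af a (- (a * r)) z * W a (- (a * r)) c (- (c * r)) (S n) z
     + Bf c (- (c * r)) z * W a (- (a * r)) c (- (c * r)) n z).
  unfold Af, Bf. ring.
Qed.

Lemma W_reduced n z :
  W a (- (a * r)) c (- (c * r)) n z = (z - r) ^ Nat.div2 n * V n z.
Proof.
  revert n. apply nat_ind2; [rewrite V_0; simpl; ring | rewrite V_1; simpl; ring |].
  intros n IH1 IH2.
  rewrite W_reduced_rec, IH1, IH2, V_SS, div2_S_parity. unfold Vcoef.
  change (Nat.div2 (S (S n))) with (S (Nat.div2 n)).
  destruct (Nat.even n); simpl; ring.
Qed.

Lemma W_reduced_sign n z :
  (-1) ^ n * W a (- (a * r)) c (- (c * r)) n z
  = (r - z) ^ Nat.div2 n * ((-1) ^ Nat.div2 (S n) * V n z).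
Proof.
  rewrite W_reduced, <- (div2_add_div2_S n) at 1.
  replace (z - r) with (-1 * (r - z)) by ring.
  rewrite pow_add, Rpow_mult_distr.
  set (k := Nat.div2 n). set (k' := Nat.div2 (S n)).
  transitivity (((-1) ^ k * (-1) ^ k) * ((r - z) ^ k * ((-1) ^ k' * V n z))); [ring|].
  rewrite pow_m1_sqr. ring.
Qed.

Section Interlacing.
Variable u : R.
Hypotheses (hu : u < 0) (halt_u : forall n, 0 < (-1) ^ Nat.div2 (S n) * V n u).

Lemma V_zeros_step n z0 z1 :
  splits_in u r (Vl n) (Nat.div2 (S n)) z0 ->
  splits_in u r (Vl (S n)) (Nat.div2 (S (S n))) z1 ->
  interlace z1 z0 (Nat.div2 (S n)) (Nat.div2 (S (S n))) ->
  exists z2, splits_in u r (Vl (S (S n))) (Nat.div2 (S (S (S n)))) z2 /\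
             interlace z2 z1 (Nat.div2 (S (S n))) (Nat.div2 (S (S (S n)))).
Proof.
  intros H0 [Hinc1 [Hb1 Hf1]] Hint.
  pose proof (div2_S_parity n) as E0.
  pose proof (Vl_degree n) as [_ Hlc0].
  assert (HK : (Nat.div2 (S (S n)) = S (Nat.div2 (S n)) \/ Nat.div2 (S (S n)) = Nat.div2 (S n))
               /\ (1 <= Nat.div2 (S (S n)))%nat).
  { change (Nat.div2 (S (S n))) with (S (Nat.div2 n)).
    rewrite E0. destruct (Nat.even n); split; auto with arith. }
  assert (HKL : (Nat.div2 (S n) <= Nat.div2 (S (S n)) <= S (Nat.div2 (S n)))%nat)
    by (destruct HK as [[E|E] _]; rewrite E; split; auto with arith).
  clear E0. apply splits_of_interlacing_signs; auto; try tauto.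
  - apply has_degree_of_pos, Vl_degree.
  - exact (halt_u (S (S n))).
  - exact (V_at_r (S (S n))).
  - intros i Hi. change (0 < (-1) ^ (Nat.div2 (S n) - i) * V (S (S n)) (z1 i)).
    assert (Hz : V (S n) (z1 i) = 0) by (unfold V; rewrite Hf1, root_prod_root by lia; ring).
    rewrite V_SS, Hz.
    pose proof (sign_at_interlacing_points u r (Vl n) _ _ z0 z1 i H0 Hlc0
                  Hinc1 Hint HKL Hi) as Hs.
    fold (V n (z1 i)) in Hs. nra.
Qed.

Lemma V_interlaced_zeros n : exists z0 z1,
  splits_in u r (Vl n) (Nat.div2 (S n)) z0 /\
  splits_in u r (Vl (S n)) (Nat.div2 (S (S n))) z1 /\
  interlace z1 z0 (Nat.div2 (S n)) (Nat.div2 (S (S n))).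
Proof.
  induction n as [|n [z0 [z1 [H0 [H1 Hint]]]]].
  - exists (fun _ => 0), (fun _ => 0). simpl.
    split; [|split]; [| |intros i Hi; lia].
    + split; [|split]; [intros i j Hij; lia | intros i Hi; lia | intros x; simpl; ring].
    + split; [|split]; [intros i j Hij; lia | intros i Hi; lra | intros x; simpl; ring].
  - destruct (V_zeros_step n z0 z1 H0 H1 Hint) as [z2 [H2 Hint2]].
    exists z1, z2. auto.
Qed.

Lemma V_splits n : exists z, splits_in u r (Vl n) (Nat.div2 (S n)) z.
Proof. destruct (V_interlaced_zeros n) as [z [_ [Hz _]]]. now exists z. Qed.

End Interlacing.

Definition Ulist (n : nat) : list R := pscal (/ a ^ Nat.div2 n) (Vl n).

Lemma Ulist_U_poly n : U_poly a (- (a * r)) c (- (c * r)) n (Ulist n).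
Proof.
  intros z Hz. unfold Ulist, Af in *.
  rewrite reval_pscal, W_reduced. fold (V n z).
  replace (a * z + - (a * r)) with (a * (z - r)) by ring. rewrite Rpow_mult_distr.
  assert (z - r <> 0) by (intro E; apply Hz; replace z with r by lra; ring).
  field. split; apply pow_nonzero; lra.
Qed.

Lemma Ulist_degree n : has_degree (Ulist n) (Nat.div2 (S n)).
Proof.
  apply has_degree_of_pos, has_pos_degree_pscal, Vl_degree.
  apply Rinv_0_lt_compat, pow_lt, ha.
Qed.

Lemma Ulist_root n x : V n x = 0 -> reval (Ulist n) x = 0.
Proof. intros H. unfold Ulist. rewrite reval_pscal. fold (V n x). rewrite H. ring. Qed.

Lemma V_alt_pos_of_W n z :
  z < r -> 0 < (-1) ^ n * W a (- (a * r)) c (- (c * r)) n z ->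
  0 < (-1) ^ Nat.div2 (S n) * V n z.
Proof.
  intros Hz H. rewrite W_reduced_sign in H.
  assert (0 < (r - z) ^ Nat.div2 n) by (apply pow_lt; lra). nra.
Qed.

Lemma V_alt_neg_of_W n z :
  z < r -> (-1) ^ n * W a (- (a * r)) c (- (c * r)) n z < 0 ->
  (-1) ^ Nat.div2 (S n) * V n z < 0.
Proof.
  intros Hz H. rewrite W_reduced_sign in H.
  assert (0 < (r - z) ^ Nat.div2 n) by (apply pow_lt; lra). nra.
Qed.

(* At the band edge [a^2 (u - r) + 4 c = 0] the characteristic roots of [W] coincide. *)
Lemma V_alternates_at_band_edge u :
  u = r - 4 * c / a ^ 2 -> u <= - 2 * c / a -> forall n, 0 < (-1) ^ Nat.div2 (S n) * V n u.
Proof.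
  intros Hu Hu2 n. set (l := - 2 * c / a).
  assert (Hl : l < 0) by (unfold l; apply Rdiv_neg_pos; lra).
  apply V_alt_pos_of_W; [unfold l in *; lra|].
  pose proof (second_order_double_root (a * (u - r)) (c * (u - r))
                (fun n => W a (- (a * r)) c (- (c * r)) n u) (fun n => W_reduced_rec n u) l
                ltac:(rewrite Hu; unfold l; field; lra) ltac:(rewrite Hu; unfold l; field; lra) n)
    as E. cbn beta in E. change (W a (- (a * r)) c (- (c * r)) 1 u) with u in E.
  change (W a (- (a * r)) c (- (c * r)) 0 u) with 1 in E.
  assert (Hp : 0 < (-1) ^ n * l ^ n) by (rewrite <- Rpow_mult_distr; apply pow_lt; lra).
  assert (0 <= INR n) by apply pos_INR.
  assert (Hneg : (-1) ^ n * W a (- (a * r)) c (- (c * r)) n u * l < 0).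
  { replace ((-1) ^ n * W a (- (a * r)) c (- (c * r)) n u * l) with
      ((-1) ^ n * (W a (- (a * r)) c (- (c * r)) n u * l)) by ring.
    rewrite E. replace (l * 1 + INR n * (u - l * 1)) with (l + INR n * (u - l)) by ring.
    assert (Hul : u <= l) by (unfold l; lra).
    assert (l + INR n * (u - l) < 0) by nra. rewrite <- Rmult_assoc. nra. }
  nra.
Qed.

(* The paper's [g] for [b = - a r] and [d = - c r]. *)
Definition gpoly (z : R) : R := (1 - a) * z ^ 2 + (a * r - c) * z + c * r.

(* [g(u) = 0] says [u^2 = A(u) u + B(u)], hence [W_n(u) = u^n]. *)
Lemma V_alternates_at_g_root u :
  u < 0 -> gpoly u = 0 -> forall n, 0 < (-1) ^ Nat.div2 (S n) * V n u.
Proof.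
  intros Hu Hg n. apply V_alt_pos_of_W; [lra|].
  rewrite (second_order_geometric (a * (u - r)) (c * (u - r))
             (fun n => W a (- (a * r)) c (- (c * r)) n u) (fun n => W_reduced_rec n u)) by
    (simpl; auto; unfold gpoly in Hg; nra).
  simpl. rewrite <- Rpow_mult_distr. apply pow_lt. lra.
Qed.

Lemma V_chebyshev p m k : (1 <= k < m)%nat ->
  let x := r + 2 * c * (cos (INR k * PI / INR m) - 1) / a ^ 2 in
  V (p + 2 * m) x = c ^ m * (-1) ^ k * V p x.
Proof.
  intros Hk x.
  assert (Hcj : forall j, c ^ j <> 0) by (intros; apply pow_nonzero; lra).
  assert (Hx : a ^ 2 * (x - r) + 2 * c = 2 * c * cos (INR k * PI / INR m))
    by (unfold x; field; lra).
  pose proof (chebyshev_at_root (fun j => V (p + 2 * j) x / c ^ j) m k Hk) as E.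
  cbn beta in E. rewrite Nat.add_0_r, pow_O, Rdiv_1_r in E.
  rewrite Rmult_assoc, <- E; [field; auto|].
  intros j. replace (p + 2 * S (S j))%nat with (S (S (S (S (p + 2 * j))))) by lia.
  replace (p + 2 * S j)%nat with (S (S (p + 2 * j))) by lia.
  rewrite V_SSSS, Hx. simpl. field. split; auto. lra.
Qed.

Lemma V_zero_between n x y : x < y -> V n x * V n y < 0 -> exists w, x < w < y /\ V n w = 0.
Proof. apply IVT_strict, reval_continuous. Qed.

Lemma chebyshev_gap_small d : 0 < d -> exists M, forall m, (M <= m)%nat ->
  (2 <= m)%nat /\ 0 < 2 * c * (1 - cos (PI / INR m)) / a ^ 2 < d.
Proof.
  intros Hd. destruct (cos_PI_div_tends_to_1 (d * a ^ 2 / (2 * c))) as [M HM].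
  { assert (0 < a ^ 2) by (apply pow_lt; lra). apply Rdiv_lt_0_compat; nra. }
  exists (M + 2)%nat. intros m Hm. split; [lia|].
  pose proof (cos_PI_div_lt_1 m ltac:(lia)). specialize (HM m ltac:(lia)).
  assert (0 < a ^ 2) by (apply pow_lt; lra).
  split; [apply Rdiv_lt_0_compat; nra|].
  apply (Rmult_lt_reg_r (a ^ 2 / (2 * c))); [apply Rdiv_lt_0_compat; nra|].
  replace (2 * c * (1 - cos (PI / INR m)) / a ^ 2 * (a ^ 2 / (2 * c))) with (1 - cos (PI / INR m))
    by (field; lra).
  replace (d * (a ^ 2 / (2 * c))) with (d * a ^ 2 / (2 * c)) by (field; lra). exact HM.
Qed.

Lemma V_zeros_near_r eps : 0 < eps ->
  exists M, forall n, (M <= n)%nat -> exists x, r - eps < x < r /\ V n x = 0.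
Proof.
  intros Heps. destruct (chebyshev_gap_small (Rmin eps r)) as [M HM]; [now apply Rmin_glb_lt|].
  exists (2 * M)%nat. intros n Hn.
  destruct (parity_decomp n) as [p [m [Hp ->]]].
  destruct (HM m ltac:(lia)) as [Hm2 Hgap].
  pose proof (V_chebyshev p m 1 ltac:(lia)) as E.
  set (x := r + 2 * c * (cos (INR 1 * PI / INR m) - 1) / a ^ 2) in E.
  assert (Hx : x = r - 2 * c * (1 - cos (PI / INR m)) / a ^ 2)
    by (unfold x; rewrite Rmult_1_l; field; lra).
  pose proof (Rmin_l eps r). pose proof (Rmin_r eps r).
  assert (Hcm : 0 < c ^ m) by (apply pow_lt; lra).
  destruct (V_zero_between (p + 2 * m) x r) as [w Hw]; [lra | |exists w; split; [lra | apply Hw]].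
  pose proof (V_at_r (p + 2 * m)).
  assert (V p x > 0) by (destruct Hp as [->| ->]; [rewrite V_0 | rewrite V_1]; lra).
  rewrite E, pow_1. assert (0 < c ^ m * V p x) by nra. nra.
Qed.

(* Chebyshev nodes [k = m - 1] cluster at the band edge [r - 4 c / a^2]. *)
Lemma V_zeros_near_band_edge u eps :
  u = r - 4 * c / a ^ 2 -> u <= - 2 * c / a -> 0 < eps ->
  exists M, forall n, (M <= n)%nat -> exists x, u < x < u + eps /\ V n x = 0.
Proof.
  intros Hu Hu2 Heps.
  assert (Hu0 : u < 0) by (assert (0 < 2 * c / a) by (apply Rdiv_lt_0_compat; lra); lra).
  destruct (chebyshev_gap_small (Rmin eps (- u))) as [M HM]; [apply Rmin_glb_lt; lra|].
  exists (2 * M)%nat. intros n Hn.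
  destruct (parity_decomp n) as [p [m [Hp ->]]].
  destruct (HM m ltac:(lia)) as [Hm2 Hgap].
  destruct m as [|m']; [lia|].
  pose proof (V_chebyshev p (S m') m' ltac:(lia)) as E.
  set (x := r + 2 * c * (cos (INR m' * PI / INR (S m')) - 1) / a ^ 2) in E.
  assert (Hcos : cos (INR m' * PI / INR (S m')) = - cos (PI / INR (S m'))).
  { replace (INR m' * PI / INR (S m')) with (PI - PI / INR (S m'))
      by (rewrite S_INR; field; pose proof (pos_INR m'); lra).
    rewrite cos_minus, cos_PI, sin_PI. ring. }
  assert (Hx : x = u + 2 * c * (1 - cos (PI / INR (S m'))) / a ^ 2)
    by (unfold x; rewrite Hcos, Hu; field; lra).
  pose proof (Rmin_l eps (- u)). pose proof (Rmin_r eps (- u)).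
  assert (Hcm : 0 < c ^ S m') by (apply pow_lt; lra).
  destruct (V_zero_between (p + 2 * S m') u x) as [w Hw];
    [lra | |exists w; split; [lra | apply Hw]].
  apply (opposite_signs_product (Nat.div2 (S (p + 2 * S m'))));
    [apply V_alternates_at_band_edge; auto|].
  rewrite E. pose proof (pow_m1_sqr m') as Hsq.
  destruct Hp as [->| ->]; [rewrite V_0 | rewrite V_1].
  - replace (Nat.div2 (S (0 + 2 * S m'))) with (S m') by (symmetry; apply Nat.div2_succ_double).
    replace ((-1) ^ S m' * (c ^ S m' * (-1) ^ m' * 1))
      with (- c ^ S m' * ((-1) ^ m' * (-1) ^ m')) by (simpl; ring).
    rewrite Hsq. lra.
  - replace (Nat.div2 (S (1 + 2 * S m'))) with (S (S m'))
      by (replace (S (1 + 2 * S m')) with (2 * S (S m'))%nat by lia;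
          symmetry; apply Nat.div2_double).
    replace ((-1) ^ S (S m') * (c ^ S m' * (-1) ^ m' * x))
      with (c ^ S m' * x * ((-1) ^ m' * (-1) ^ m')) by (simpl; ring).
    rewrite Hsq. assert (x < 0) by lra. nra.
Qed.

Lemma g_root_right_neighbourhood u eps :
  u < 0 -> gpoly u = 0 -> 0 < (2 - a) * u + a * r -> (forall z, u < z <= 0 -> 0 < gpoly z) ->
  0 < eps -> exists z0, u < z0 < u + eps /\ z0 < 0 /\ a ^ 2 * (z0 - r) + 4 * c < 0 /\
                        0 < (2 - a) * z0 + a * r /\ 0 < gpoly z0.
Proof.
  intros Hu Hg Hh Hpos Heps.
  assert (Hdisc_u : a ^ 2 * (u - r) + 4 * c < 0).
  { assert (E : 4 * gpoly u = ((2 - a) * u + a * r) ^ 2 - (u - r) * (a ^ 2 * (u - r) + 4 * c))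
      by (unfold gpoly; ring).
    rewrite Hg in E. assert (0 < (u - r) * (a ^ 2 * (u - r) + 4 * c)) by nra. nra. }
  assert (Ha2 : 0 < a ^ 2) by (apply pow_lt; lra).
  set (del := Rmin eps (Rmin (- u) (- (a ^ 2 * (u - r) + 4 * c) / a ^ 2))).
  assert (Hdel : 0 < del)
    by (unfold del; repeat apply Rmin_glb_lt; [lra | lra | apply Rdiv_lt_0_compat; lra]).
  assert (Hd1 : del <= eps) by apply Rmin_l.
  assert (Hd2 : del <= - u) by (eapply Rle_trans; [apply Rmin_r | apply Rmin_l]).
  assert (Hd3 : a ^ 2 * del <= - (a ^ 2 * (u - r) + 4 * c)).
  { assert (H : del <= - (a ^ 2 * (u - r) + 4 * c) / a ^ 2)
      by (eapply Rle_trans; [apply Rmin_r | apply Rmin_r]).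
    apply (Rmult_le_compat_l (a ^ 2)) in H; [|lra].
    replace (a ^ 2 * (- (a ^ 2 * (u - r) + 4 * c) / a ^ 2)) with (- (a ^ 2 * (u - r) + 4 * c))
      in H by (field; lra). exact H. }
  exists (u + del / 2). repeat split; try lra.
  - destruct (Rle_lt_dec a 2); nra.
  - apply Hpos; lra.
Qed.

(* Just above a root [u] of [g] the characteristic roots of [W] are real and negative, and
   [W] eventually follows the dominant one, whose sign pattern is opposite to that at [u]. *)
Lemma V_zeros_near_g_root u eps :
  u < 0 -> gpoly u = 0 -> 0 < (2 - a) * u + a * r -> (forall z, u < z <= 0 -> 0 < gpoly z) ->
  0 < eps -> exists M, forall n, (M <= n)%nat -> exists x, u < x < u + eps /\ V n x = 0.
Proof.
  intros Hu Hg Hh Hpos Heps.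
  destruct (g_root_right_neighbourhood u eps Hu Hg Hh Hpos Heps)
    as [z0 [Hz0 [Hz0neg [Hdisc [Hh0 Hg0]]]]].
  destruct (second_order_eventually_alternating (a * (z0 - r)) (c * (z0 - r))
              (fun n => W a (- (a * r)) c (- (c * r)) n z0) (fun n => W_reduced_rec n z0))
    as [N HN]; cbn beta.
  1-4: try reflexivity; nra.
  - change (W a (- (a * r)) c (- (c * r)) 1 z0) with z0.
    replace (2 * z0 - a * (z0 - r)) with (sqrt (((2 - a) * z0 + a * r) ^ 2))
      by (rewrite sqrt_pow2; [ring | lra]).
    apply sqrt_lt_1_alt.
    assert (4 * gpoly z0 = ((2 - a) * z0 + a * r) ^ 2 - (z0 - r) * (a ^ 2 * (z0 - r) + 4 * c))
      by (unfold gpoly; ring).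
    nra.
  - exists N. intros n Hn.
    destruct (V_zero_between n u z0) as [w Hw]; [lra | |exists w; split; [lra | apply Hw]].
    apply (opposite_signs_product (Nat.div2 (S n))); [now apply V_alternates_at_g_root|].
    apply V_alt_neg_of_W; [lra | apply HN, Hn].
Qed.

End Reduced.

(** * The point u *)

Section RootOfG.
Variables a c r : R.
Hypotheses (ha : 0 < a) (hc : 0 < c) (hr : 0 < r).
Hypothesis hF : 2 * c * (2 - a) < a ^ 2 * r.

Lemma g_root_quadratic : a <> 1 ->
  let s := sqrt ((c - a * r) ^ 2 - 4 * c * r * (1 - a)) in
  let uu := (c - a * r + s) / (2 * (1 - a)) in
  uu < 0 /\ gpoly a c r uu = 0 /\ forall z, uu < z <= 0 -> 0 < gpoly a c r z.
Proof.
  intros Ha1 s uu.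
  assert (Hdelta : 0 < (c - a * r) ^ 2 - 4 * c * r * (1 - a)) by nra.
  assert (Hs : s * s = (c - a * r) ^ 2 - 4 * c * r * (1 - a)) by (apply sqrt_sqrt; lra).
  assert (Hs0 : 0 < s) by (apply sqrt_lt_R0; lra).
  assert (Hsb : c - a * r < s).
  { destruct (Rle_lt_dec (c - a * r) 0); [lra|].
    assert (1 < a).
    { destruct (Rtotal_order a 1) as [Hlt|[Heq|Hgt]]; [exfalso | contradiction | exact Hgt].
      assert (0 < a * r * (1 - a)) by (apply Rmult_lt_0_compat; nra).
      assert (a ^ 2 * r < a * r) by nra.
      nra. }
    assert (0 < 4 * c * r * (a - 1)) by (apply Rmult_lt_0_compat; nra). nra. }
  assert (Hsq : 0 < (1 - a) * (1 - a)) by (apply Rsqr_pos_lt; lra).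
  assert (Hprod : (1 - a) * (c - a * r + s) < 0).
  { assert (E : ((1 - a) * (c - a * r + s)) * (s - (c - a * r)) = - 4 * c * r * ((1 - a) * (1 - a)))
      by nra.
    assert (0 < 4 * c * r * ((1 - a) * (1 - a))) by (apply Rmult_lt_0_compat; nra).
    destruct (Rle_lt_dec 0 ((1 - a) * (c - a * r + s))); [|assumption]. nra. }
  assert (Huu : 2 * (1 - a) * uu - (c - a * r) = s) by (unfold uu; field; lra).
  assert (Hg0 : gpoly a c r uu = 0).
  { assert (E : 4 * (1 - a) * gpoly a c r uu
                = (2 * (1 - a) * uu - (c - a * r)) ^ 2 - ((c - a * r) ^ 2 - 4 * c * r * (1 - a)))
      by (unfold gpoly; ring).
    rewrite Huu, <- Hs in E. replace (s ^ 2 - s * s) with 0 in E by ring.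
    apply Rmult_integral in E as [E|E]; lra. }
  assert (Hg : forall z, gpoly a c r z = (z - uu) * ((1 - a) * (z - uu) + s)).
  { intros z. transitivity (gpoly a c r z - gpoly a c r uu); [rewrite Hg0; ring|].
    rewrite <- Huu. unfold gpoly. ring. }
  assert (Hneg : uu < 0).
  { assert (uu * (2 * (1 - a) * (1 - a)) = (1 - a) * (c - a * r + s)) by (unfold uu; field; lra).
    nra. }
  split; [exact Hneg | split; [exact Hg0|]].
  intros z Hz. rewrite Hg. apply Rmult_lt_0_compat; [lra|].
  assert (2 * (1 - a) * uu = c - a * r + s) by lra.
  destruct (Rle_lt_dec a 1); nra.
Qed.

Lemma g_root_linear : a = 1 ->
  let uu := c * r / (c - r) in
  uu < 0 /\ gpoly a c r uu = 0 /\ forall z, uu < z <= 0 -> 0 < gpoly a c r z.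
Proof.
  intros -> uu. unfold gpoly.
  assert (Hrc : c < r) by nra.
  assert (Huu : uu * (c - r) = c * r) by (unfold uu; field; lra).
  split; [|split]; [nra | nra | intros z Hz; nra].
Qed.

(* [(2 - a) u + a r = 2 u - A(u)]: its positivity puts [W] above the smaller characteristic
   root in [V_zeros_near_g_root]. *)
Lemma g_root_vertex uu : uu < 0 -> gpoly a c r uu = 0 ->
  (forall z, uu < z <= 0 -> 0 < gpoly a c r z) -> 0 < (2 - a) * uu + a * r.
Proof.
  intros Hu Hg Hpos. destruct (Rlt_le_dec a 2) as [Ha2|Ha2]; [|nra].
  set (zs := - a * r / (2 - a)).
  assert (Hzs : (2 - a) * zs = - a * r) by (unfold zs; field; lra).
  assert (Hgzs : gpoly a c r zs < 0).
  { assert (E : 4 * gpoly a c r zs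
                = ((2 - a) * zs + a * r) ^ 2 - (zs - r) * (a ^ 2 * (zs - r) + 4 * c))
      by (unfold gpoly; ring).
    rewrite Hzs in E.
    assert (Hzr : (2 - a) * (zs - r) = - 2 * r) by lra.
    assert ((2 - a) * (a ^ 2 * (zs - r) + 4 * c) < 0) by nra.
    assert (zs - r < 0) by nra.
    assert (a ^ 2 * (zs - r) + 4 * c < 0) by nra. nra. }
  destruct (Rle_lt_dec ((2 - a) * uu + a * r) 0) as [Hle|]; [|assumption].
  assert (uu <= zs) by nra.
  assert (zs < 0) by nra.
  destruct (Rle_lt_or_eq_dec uu zs) as [Hlt|Heq]; [assumption | |].
  - assert (0 < gpoly a c r zs) by (apply Hpos; lra). lra.
  - rewrite Heq in Hg. lra.
Qed.

End RootOfG.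

Lemma xDelta_minus_reduced a c r : 0 < a -> 0 < c ->
  xDelta_minus a (- (a * r)) c (- (c * r)) = r - 4 * c / a ^ 2.
Proof.
  intros ha hc. unfold xDelta_minus, DeltaDelta, Bf, xA.
  replace (c ^ 2 - a ^ 2 * (c * (- - (a * r) / a) + - (c * r))) with (c ^ 2) by (field; lra).
  rewrite sqrt_pow2 by lra. field. lra.
Qed.

Lemma u_reduced_cases a c r : 0 < a -> 0 < c -> 0 < r ->
  let U := u a (- (a * r)) c (- (c * r)) in
  (U = r - 4 * c / a ^ 2 /\ U <= - 2 * c / a) \/
  (U < 0 /\ gpoly a c r U = 0 /\ 0 < (2 - a) * U + a * r /\
   forall z, U < z <= 0 -> 0 < gpoly a c r z).
Proof.
  intros ha hc hr U.
  assert (HF : Ff a (- (a * r)) c (- (c * r)) = r * (a ^ 2 * r - 2 * c * (2 - a)))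
    by (unfold Ff; ring).
  assert (HD : Deltag a (- (a * r)) c (- (c * r)) = (c - a * r) ^ 2 - 4 * c * r * (1 - a))
    by (unfold Deltag; ring).
  assert (Hg : 2 * c * (2 - a) < a ^ 2 * r -> forall uu,
            uu < 0 /\ gpoly a c r uu = 0 /\ (forall z, uu < z <= 0 -> 0 < gpoly a c r z) ->
            U = uu -> (U < 0 /\ gpoly a c r U = 0 /\ 0 < (2 - a) * U + a * r /\
                       forall z, U < z <= 0 -> 0 < gpoly a c r z)).
  { intros hF uu [H1 [H2 H3]] EU. rewrite EU.
    repeat split; auto. eapply g_root_vertex; eauto. }
  assert (Hquad : a <> 1 -> 2 * c * (2 - a) < a ^ 2 * r ->
            U = (c - a * r + sqrt ((c - a * r) ^ 2 - 4 * c * r * (1 - a))) / (2 * (1 - a)) ->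
            (U < 0 /\ gpoly a c r U = 0 /\ 0 < (2 - a) * U + a * r /\
             forall z, U < z <= 0 -> 0 < gpoly a c r z))
    by (intros Ha1 hF EU; eapply Hg; [exact hF | eapply g_root_quadratic; eauto | exact EU]).
  unfold U, u, xg_plus, xg_minus in *. rewrite HF, HD in *.
  destruct (Rlt_dec a 2) as [Ha2|Ha2].
  - destruct (Rle_dec (r * (a ^ 2 * r - 2 * c * (2 - a))) 0) as [HF0|HF0].
    + left. rewrite xDelta_minus_reduced by assumption.
      split; [reflexivity|].
      apply (Rmult_le_reg_r (a ^ 2)); [nra|].
      replace ((r - 4 * c / a ^ 2) * a ^ 2) with (a ^ 2 * r - 4 * c) by (field; lra).
      replace (- 2 * c / a * a ^ 2) with (- 2 * c * a) by (field; lra). nra.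
    + right. assert (hF : 2 * c * (2 - a) < a ^ 2 * r) by nra.
      destruct (Rlt_dec a 1) as [Ha1|Ha1]; destruct (Req_EM_T a 1) as [Ea|Ea]; try lra.
      * apply Hquad; auto. rewrite Rabs_right by lra. field. lra.
      * subst a. apply (Hg hF (c * r / (c - r))); [apply g_root_linear; auto; lra|].
        field. nra.
      * apply Hquad; auto. rewrite Rabs_left by lra. field. lra.
  - right. apply Rnot_lt_le in Ha2.
    assert (0 < a ^ 2 * r) by (apply Rmult_lt_0_compat; nra).
    assert (hF : 2 * c * (2 - a) < a ^ 2 * r) by nra.
    destruct (Req_EM_T a 1) as [Ea|Ea]; [lra|].
    apply Hquad; auto. rewrite Rabs_left by lra. field. lra.
Qed.

Lemma u_reduced_properties a c r : 0 < a -> 0 < c -> 0 < r ->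
  let U := u a (- (a * r)) c (- (c * r)) in
  U < 0 /\ (forall n, 0 < (-1) ^ Nat.div2 (S n) * V a c r n U) /\
  (forall eps, 0 < eps -> exists M, forall n, (M <= n)%nat ->
     exists x, U < x < U + eps /\ V a c r n x = 0).
Proof.
  intros ha hc hr; cbv zeta.
  destruct (u_reduced_cases a c r ha hc hr) as [[H1 H2]|[H1 [H2 [H3 H4]]]].
  - split; [assert (0 < 2 * c / a) by (apply Rdiv_lt_0_compat; lra); lra|].
    split; [now apply V_alternates_at_band_edge | intros; now apply V_zeros_near_band_edge].
  - split; [exact H1|].
    split; [now apply V_alternates_at_g_root | intros; now apply V_zeros_near_g_root].
Qed.

(** * Limits of extreme zeros *)

Section ExtremeZeros.
Variables (a b c d lo hi : R) (P : nat -> list R) (K : nat -> nat) (Z : nat -> nat -> R).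
Hypotheses (HU : forall n, U_poly a b c d n (P n)) (Hlc : forall n, nth (K n) (P n) 0 <> 0)
           (HZ : forall n, splits_in lo hi (P n) (K n) (Z n)).

Lemma root_between_extreme_zeros n x :
  reval (P n) x = 0 -> (0 < K n)%nat /\ Z n O <= x <= Z n (pred (K n)).
Proof.
  intros Hx. destruct (splits_in_real_root lo hi (P n) (K n) (Z n) x (HZ n) (Hlc n) Hx)
    as [i [Hi ->]].
  split; [lia|]. destruct (HZ n) as [Hinc _].
  split; apply (increasing_on_le _ (K n)); auto; lia.
Qed.

Lemma limit_of_zeros_intro zs y :
  (exists N, forall n, (N <= n)%nat -> reval (P n) (y n) = 0) ->
  (forall eps, 0 < eps -> exists M, forall n, (M <= n)%nat -> Rabs (y n - zs) < eps) ->
  limit_of_zeros a b c d zs.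
Proof.
  intros [N HN] Hcv. exists N, (fun n => mkC (y n) 0). split.
  - intros n Hn. exists (P n). split; [apply HU|]. rewrite ceval_real, HN by exact Hn. reflexivity.
  - intros eps Heps. destruct (Hcv eps Heps) as [M HM].
    exists M. intros n Hn. rewrite Cdist_real. now apply HM.
Qed.

Lemma limit_of_zeros_lower_end :
  (forall eps, 0 < eps -> exists M, forall n, (M <= n)%nat ->
     exists x, lo < x < lo + eps /\ reval (P n) x = 0) ->
  limit_of_zeros a b c d lo.
Proof.
  intros Hnear. apply (limit_of_zeros_intro lo (fun n => Z n O)).
  - destruct (Hnear 1 Rlt_0_1) as [N HN]. exists N. intros n Hn.
    destruct (HN n Hn) as [x [_ Hx]].
    apply (splits_in_root lo hi (P n) (K n));
      [apply HZ | apply (root_between_extreme_zeros n x Hx)].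
  - intros eps Heps. destruct (Hnear eps Heps) as [M HM]. exists M. intros n Hn.
    destruct (HM n Hn) as [x [Hx Hr]].
    destruct (root_between_extreme_zeros n x Hr) as [HK [Hle _]].
    destruct (HZ n) as [_ [Hb _]]. specialize (Hb O HK).
    apply Rabs_def1; lra.
Qed.

Lemma limit_of_zeros_upper_end :
  (forall eps, 0 < eps -> exists M, forall n, (M <= n)%nat ->
     exists x, hi - eps < x < hi /\ reval (P n) x = 0) ->
  limit_of_zeros a b c d hi.
Proof.
  intros Hnear. apply (limit_of_zeros_intro hi (fun n => Z n (pred (K n)))).
  - destruct (Hnear 1 Rlt_0_1) as [N HN]. exists N. intros n Hn.
    destruct (HN n Hn) as [x [_ Hx]].
    apply (splits_in_root lo hi (P n) (K n)); [apply HZ |].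
    destruct (root_between_extreme_zeros n x Hx); lia.
  - intros eps Heps. destruct (Hnear eps Heps) as [M HM]. exists M. intros n Hn.
    destruct (HM n Hn) as [x [Hx Hr]].
    destruct (root_between_extreme_zeros n x Hr) as [HK [_ Hle]].
    destruct (HZ n) as [_ [Hb _]]. specialize (Hb (pred (K n)) ltac:(lia)).
    apply Rabs_def1; lra.
Qed.

End ExtremeZeros.

Lemma common_root_form a b c d : 0 < a -> 0 < c -> d < 0 -> xA a b = xB c d ->
  b = - (a * xB c d) /\ d = - (c * xB c d) /\ 0 < xB c d.
Proof.
  unfold xA, xB. intros ha hc hd hAB.
  split; [|split]; [rewrite <- hAB; field | field | apply Rdiv_lt_0_compat]; lra.
Qed.

Theorem theorem3p6 (a b c d : R)
  (ha : 0 < a) (hc : 0 < c) (hb : b < 0) (hd : d < 0)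
  (hAB : xA a b = xB c d) :
  (forall n : nat, exists p : list R,
      U_poly a b c d n p /\
      has_degree p (Nat.div2 (S n)) /\
      (forall z : Cx, ceval p z = C0 ->
         im z = 0 /\ u a b c d < re z /\ re z < xB c d)) /\
  limit_of_zeros a b c d (u a b c d) /\
  limit_of_zeros a b c d (xB c d).
Proof.
  destruct (common_root_form a b c d ha hc hd hAB) as [Hb [Hd hr]].
  set (r := xB c d) in *. clearbody r. subst b d.
  set (U := u a (- (a * r)) c (- (c * r))).
  destruct (u_reduced_properties a c r ha hc hr) as [HU0 [Halt Hnear]].
  assert (HZ : forall n, exists z, splits_in U r (Ulist a c r n) (Nat.div2 (S n)) z).
  { intros n. destruct (V_splits a c r ha hc hr U HU0 Halt n) as [z Hz].
    exists z. now apply splits_in_pscal. }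
  destruct (choice _ HZ) as [Z HZ'].
  assert (Hlc : forall n, nth (Nat.div2 (S n)) (Ulist a c r n) 0 <> 0)
    by (intros n; apply Ulist_degree; exact ha).
  split; [|split].
  - intros n. exists (Ulist a c r n).
    split; [apply Ulist_U_poly; lra | split; [now apply Ulist_degree |]].
    intros w Hw. exact (splits_in_complex_root _ _ _ _ _ w (HZ' n) (Ulist_degree a c r ha n) Hw).
  - apply (limit_of_zeros_lower_end _ _ _ _ U r (Ulist a c r) (fun n => Nat.div2 (S n)) Z);
      auto using Ulist_U_poly.
    intros eps Heps. destruct (Hnear eps Heps) as [M HM]. exists M. intros n Hn.
    destruct (HM n Hn) as [x [Hx Hr]]. exists x. split; [exact Hx | now apply Ulist_root].
  - apply (limit_of_zeros_upper_end _ _ _ _ U r (Ulist a c r) (fun n => Nat.div2 (S n)) Z);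
      auto using Ulist_U_poly.
    intros eps Heps. destruct (V_zeros_near_r a c r ha hc hr eps Heps) as [M HM].
    exists M. intros n Hn.
    destruct (HM n Hn) as [x [Hx Hr]]. exists x. split; [exact Hx | now apply Ulist_root].
Qed.
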